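(* Let $(P,Q)$ be a quasi-projection pair on a Hilbert $C^*$-module $H$. Then $$\|(I-P)Q\|=\|Q(I-P)\|,\qquad \|(I-Q)P\|=\|P(I-Q)\|,$$ and $$\big\|(P-Q)^2\big\|\le\max\big\{\|(I-P)Q\|,\|(I-Q)P\|\big\}\le\|P-Q\|.$$
   Context: $H$ is a Hilbert module over a $C^*$-algebra, $\mathcal{L}(H)$ the adjointable operators. A quasi-projection pair is $(P,Q)$ with $P\in\mathcal{L}(H)$ a projection (self-adjoint idempotent), $Q\in\mathcal{L}(H)$ an idempotent, and $Q^*=(2P-I)Q(2P-I)$. *)

From HB Require Import structures.
From mathcomp Require Import all_boot all_order all_algebra.
From mathcomp Require Import reals.
From mathcomp.real_closed Require Import complex.
Set Implicit Arguments. Unset Strict Implicit. Unset Printing Implicit Defensive.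
Import Order.TTheory GRing.Theory Num.Theory.
Local Open Scope ring_scope.

(* For a Hilbert C*-module H, the algebra
   L(H) of adjointable operators with the adjoint and operator norm is such
   an algebra. *)
Record unital_Cstar_algebra (R : realType) (A : algType R[i])
    (star : A -> A) (nrm : A -> R) : Prop := {
  star_invol : forall x, star (star x) = x;
  star_add : forall x y, star (x + y) = star x + star y;
  star_scale : forall (a : R[i]) x, star (a *: x) = (conjc a) *: star x;
  star_mul : forall x y, star (x * y) = star y * star x;
  nrm_ge0 : forall x, 0 <= nrm x;
  nrm_eq0 : forall x, nrm x = 0 -> x = 0;
  nrm_triangle : forall x y, nrm (x + y) <= nrm x + nrm y;
  nrm_scale : forall (a : R[i]) x, nrm (a *: x) = ComplexField.Normc.normc a * nrm x;
  nrm_submul : forall x y, nrm (x * y) <= nrm x * nrm y;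
  nrm_Cstar : forall x, nrm (star x * x) = nrm x ^+ 2;
  nrm_complete : forall u : nat -> A,
    (forall e : R, 0 < e -> exists N, forall m n, (N <= m)%N -> (N <= n)%N ->
        nrm (u m - u n) < e) ->
    exists l, forall e : R, 0 < e -> exists N, forall n, (N <= n)%N ->
        nrm (u n - l) < e
}.

Definition is_projection (R : realType) (A : algType R[i]) (star : A -> A) (P : A) : Prop :=
  star P = P /\ P * P = P.

Definition quasi_projection_pair (R : realType) (A : algType R[i])
    (star : A -> A) (P Q : A) : Prop :=
  is_projection star P /\ Q * Q = Q /\
  star Q = (P *+ 2 - 1) * Q * (P *+ 2 - 1).

(* Put S = 2P - 1, a self-adjoint unitary.  The relation Q^* = SQS gives
   ((1-P)Q)^* = -SQ(1-P) and ((1-Q)P)^* = P(1-Q)S, whence the two equalities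
   since multiplication by S is isometric.  For idempotents P and Q,
   (P-Q)^2 = P(1-Q)P + (1-P)Q(1-P) is block diagonal with respect to P, so its
   norm is at most the larger of the norms of the two blocks, which are bounded
   by ||(1-Q)P|| and ||(1-P)Q||.  Finally (1-P)Q = (1-P)(Q-P) and
   P(1-Q) = P(P-Q) give the upper bound ||P-Q||.
   The block-diagonal estimate needs no spectral theory: by the C*-identity it
   reduces to mutually orthogonal self-adjoint u and v, for which
   ||u+v||^(2^n) <= ||u||^(2^n) + ||v||^(2^n), so that
   ||u+v|| <= 2^(2^-n) max(||u||, ||v||) for every n. *)
From HB Require Import structures.
From mathcomp Require Import all_boot all_order all_algebra.
From mathcomp Require Import reals.
From mathcomp.real_closed Require Import complex.
From mathcomp Require Import lra.
Import Order.TTheory GRing.Theory Num.Theory.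
Local Open Scope ring_scope.
Set Implicit Arguments. Unset Strict Implicit.

Lemma bernoulli_ineq (R : realDomainType) (r : R) (n : nat) :
  0 <= r -> 1 + n%:R * (r - 1) <= r ^+ n.
Proof.
move=> r_ge0; elim: n => [|n IHn]; first by rewrite mul0r addr0 expr0.
rewrite exprS -natr1.
have : 0 <= r * (r ^+ n - (1 + n%:R * (r - 1))) by rewrite mulr_ge0 ?subr_ge0.
have : 0 <= n%:R * ((r - 1) * (r - 1)) by rewrite mulr_ge0 // -expr2 sqr_ge0.
nra.
Qed.

Lemma ler_of_exp2n_bounded (R : archiRealFieldType) (t m c : R) : 0 <= m ->
  (forall n, t ^+ (2 ^ n) <= c * m ^+ (2 ^ n)) -> t <= m.
Proof.
move=> m_ge0 bounded; rewrite leNgt; apply/negP => lt_mt.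
have := bounded 0%N; rewrite expn0 !expr1 => t_le.
have m_gt0 : 0 < m.
  by rewrite lt_def m_ge0 andbT; apply: contraTneq t_le => ->; nra.
pose r := t / m.
have r_gt1 : 1 < r by rewrite ltr_pdivlMr // mul1r.
have r_bounded n : r ^+ (2 ^ n) <= c.
  by rewrite -(ler_pM2r (exprn_gt0 (2 ^ n) m_gt0)) -exprMn /r divfK ?gt_eqF.
have c_ge0 : 0 <= c by have := r_bounded 0%N; rewrite expn0 expr1; lra.
have /archi_boundP : 0 <= c / (r - 1) by rewrite divr_ge0 //; lra.
set n := Num.Def.archi_bound _ => lt_cn.
have le_n2n : n%:R <= (2 ^ n)%:R :> R by rewrite ler_nat ltnW // ltn_expl.
have : c < (2 ^ n)%:R * (r - 1).
  by rewrite -ltr_pdivrMr ?subr_gt0 // (lt_le_trans lt_cn).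
have := @bernoulli_ineq _ r (2 ^ n) (ltW (lt_trans ltr01 r_gt1)).
have := r_bounded n; lra.
Qed.

Lemma exprn_max (R : realDomainType) (x y : R) n : 0 <= x -> 0 <= y ->
  Num.max x y ^+ n = Num.max (x ^+ n) (y ^+ n).
Proof.
move=> x_ge0 y_ge0; have [le_xy|/ltW le_yx] := leP x y.
  by rewrite !max_r // lerXn2r.
by rewrite !max_l // lerXn2r.
Qed.

(* In lemma names, [refl] is the symmetry [P *+ 2 - 1] = 2P - 1. *)
Section IdempotentAlgebra.
Variables (A : pzRingType) (P Q : A).
Hypotheses (PP : P * P = P) (QQ : Q * Q = Q).

Lemma mul_subr1_idem : (1 - P) * P = 0.
Proof. by rewrite mulrBl mul1r PP subrr. Qed.

Lemma mul_idem_subr1 : P * (1 - P) = 0.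
Proof. by rewrite mulrBr mulr1 PP subrr. Qed.

Lemma idem_subr1 : (1 - P) * (1 - P) = 1 - P.
Proof. by rewrite mulrBl mul1r mul_idem_subr1 subr0. Qed.

Lemma mul_idem_refl : P * (P *+ 2 - 1) = P.
Proof. by rewrite mulrBr mulr1 mulrnAr PP mulr2n addrK. Qed.

Lemma mul_refl_idem : (P *+ 2 - 1) * P = P.
Proof. by rewrite mulrBl mul1r mulrnAl PP mulr2n addrK. Qed.

Lemma mul_refl_subr1 : (P *+ 2 - 1) * (1 - P) = - (1 - P).
Proof. by rewrite mulrBr mulr1 mul_refl_idem opprB mulr2n addrAC addrK. Qed.

Lemma mul_refl_refl : (P *+ 2 - 1) * (P *+ 2 - 1) = 1.
Proof. by rewrite {1}mulrBl mul1r mulrnAl mul_idem_refl opprB addrC subrK. Qed.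

Lemma sqr_sub_idem :
  (P - Q) ^+ 2 = P * (1 - Q) * P + (1 - P) * Q * (1 - P).
Proof.
rewrite expr2 !(mulrBl, mulrBr) !mul1r !mulr1 PP QQ !opprB.
by rewrite [RHS]addrCA subrKA addrACA [RHS]addrACA (addrC Q).
Qed.

End IdempotentAlgebra.

Section CstarAlgebra.
Variables (R : realType) (A : algType R[i]) (star : A -> A) (nrm : A -> R).
Hypothesis hA : unital_Cstar_algebra star nrm.

Lemma star0 : star 0 = 0.
Proof. by apply: (addrI (star 0)); rewrite -(star_add hA) !addr0. Qed.

Lemma starN x : star (- x) = - star x.
Proof. by apply/eqP; rewrite -addr_eq0 -(star_add hA) addNr star0. Qed.

Lemma starB x y : star (x - y) = star x - star y.
Proof. by rewrite (star_add hA) starN. Qed.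

Lemma star1 : star 1 = 1.
Proof.
have := congr1 star (mulr1 (star 1)).
by rewrite (star_mul hA) !(star_invol hA) mulr1.
Qed.

Lemma star_subr1 x : star (1 - x) = 1 - star x.
Proof. by rewrite starB star1. Qed.

Lemma nrm_star x : nrm (star x) = nrm x.
Proof.
have le_nrm_star y : nrm y <= nrm (star y).
  have := nrm_submul hA (star y) y; rewrite (nrm_Cstar hA).
  have := nrm_ge0 hA y; have := nrm_ge0 hA (star y); nra.
by apply/le_anti; rewrite le_nrm_star -{2}(star_invol hA x) le_nrm_star.
Qed.

Lemma nrm_sqr_selfadj u : star u = u -> nrm (u * u) = nrm u ^+ 2.
Proof. by move=> su; rewrite -{1}su (nrm_Cstar hA). Qed.

Lemma nrm_proj_le1 E : is_projection star E -> nrm E <= 1.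
Proof.
move=> [sE EE]; have := nrm_sqr_selfadj sE; rewrite EE.
have := nrm_ge0 hA E; nra.
Qed.

Lemma nrm_symmetry_le1 w : star w = w -> w * w = 1 -> nrm w <= 1.
Proof.
move=> sw ww; have := nrm_sqr_selfadj sw; rewrite ww.
have := nrm_proj_le1 (conj star1 (mulr1 1)).
have := nrm_ge0 hA w; nra.
Qed.

Lemma nrm_contr_mull w x : nrm w <= 1 -> nrm (w * x) <= nrm x.
Proof.
move=> w_le1; have := nrm_submul hA w x.
have := nrm_ge0 hA x; have := nrm_ge0 hA w; nra.
Qed.

Lemma nrm_contr_mulr w x : nrm w <= 1 -> nrm (x * w) <= nrm x.
Proof.
move=> w_le1; have := nrm_submul hA x w.
have := nrm_ge0 hA x; have := nrm_ge0 hA w; nra.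
Qed.

Lemma nrm_symmetry_mull w x : star w = w -> w * w = 1 -> nrm (w * x) = nrm x.
Proof.
move=> sw ww; have w_le1 := nrm_symmetry_le1 sw ww.
apply/le_anti; rewrite nrm_contr_mull //=.
by have := nrm_contr_mull (w * x) w_le1; rewrite mulrA ww mul1r.
Qed.

Lemma nrm_symmetry_mulr w x : star w = w -> w * w = 1 -> nrm (x * w) = nrm x.
Proof.
move=> sw ww; have w_le1 := nrm_symmetry_le1 sw ww.
apply/le_anti; rewrite nrm_contr_mulr //=.
by have := nrm_contr_mulr (x * w) w_le1; rewrite -mulrA ww mulr1.
Qed.

Lemma nrmN x : nrm (- x) = nrm x.
Proof. by rewrite -mulN1r nrm_symmetry_mull ?mulrNN ?mulr1 // starN star1. Qed.

Lemma nrm_add_orth_selfadj_exp2n n u v :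
  star u = u -> star v = v -> u * v = 0 -> v * u = 0 ->
  nrm (u + v) ^+ (2 ^ n) <= nrm u ^+ (2 ^ n) + nrm v ^+ (2 ^ n).
Proof.
elim: n u v => [|n IHn] u v su sv uv vu.
  by rewrite !expn0 !expr1 (nrm_triangle hA).
have exp2nS y : star y = y -> nrm y ^+ (2 ^ n.+1) = nrm (y * y) ^+ (2 ^ n).
  by move=> sy; rewrite expnS exprM nrm_sqr_selfadj.
rewrite !exp2nS ?(star_add hA, su, sv) //.
have -> : (u + v) * (u + v) = u * u + v * v.
  by rewrite mulrDl !mulrDr uv vu addr0 add0r.
apply: IHn; rewrite ?(star_mul hA, su, sv) //.
  by rewrite -mulrA (mulrA u v) uv mul0r mulr0.
by rewrite -mulrA (mulrA v u) vu mul0r mulr0.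
Qed.

Lemma nrm_add_orth_selfadj u v :
  star u = u -> star v = v -> u * v = 0 -> v * u = 0 ->
  nrm (u + v) <= Num.max (nrm u) (nrm v).
Proof.
move=> su sv uv vu; apply: (@ler_of_exp2n_bounded _ _ _ 2).
  by rewrite le_max (nrm_ge0 hA).
move=> n; apply: (le_trans (nrm_add_orth_selfadj_exp2n n su sv uv vu)).
rewrite exprn_max ?(nrm_ge0 hA) // mulr2n mulrDl !mul1r.
by apply: lerD; rewrite le_max lexx ?orbT.
Qed.

Lemma nrm_add_orth a b : star a * b = 0 -> a * star b = 0 ->
  nrm (a + b) <= Num.max (nrm a) (nrm b).
Proof.
move=> a'b ab'.
have b'a : star b * a = 0 by rewrite -[a](star_invol hA) -(star_mul hA) a'b star0.
have ba' : b * star a = 0 by rewrite -[b](star_invol hA) -(star_mul hA) ab' star0.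
have selfadj_sqr x : star (star x * x) = star x * x.
  by rewrite (star_mul hA) (star_invol hA).
have sqr_add : star (a + b) * (a + b) = star a * a + star b * b.
  by rewrite (star_add hA) mulrDl !mulrDr a'b b'a addr0 add0r.
have le_sqr : nrm (a + b) ^+ 2 <= Num.max (nrm a) (nrm b) ^+ 2.
  rewrite -(nrm_Cstar hA) sqr_add exprn_max ?(nrm_ge0 hA) // -!(nrm_Cstar hA).
  apply: nrm_add_orth_selfadj; rewrite ?selfadj_sqr //.
    by rewrite -mulrA (mulrA a) ab' mul0r mulr0.
  by rewrite -mulrA (mulrA b) ba' mul0r mulr0.
by rewrite -(ler_pXn2r (isT : (0 < 2)%N)) ?nnegrE ?le_max ?(nrm_ge0 hA).
Qed.

Lemma nrm_block_diag E X Y : is_projection star E ->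
  nrm (E * X * E + (1 - E) * Y * (1 - E)) <=
  Num.max (nrm (E * X * E)) (nrm ((1 - E) * Y * (1 - E))).
Proof.
move=> [sE EE]; apply: nrm_add_orth.
  rewrite !(star_mul hA) sE -!mulrA (mulrA E (1 - E)).
  by rewrite mul_idem_subr1 // mul0r !mulr0.
rewrite !(star_mul hA) star_subr1 sE -!mulrA (mulrA E (1 - E)).
by rewrite mul_idem_subr1 // mul0r !mulr0.
Qed.

Lemma proj_subr1 E : is_projection star E -> is_projection star (1 - E).
Proof. by move=> [sE EE]; rewrite /is_projection star_subr1 sE idem_subr1. Qed.

Lemma star_refl E : star E = E -> star (E *+ 2 - 1) = E *+ 2 - 1.
Proof. by move=> sE; rewrite starB star1 mulr2n (star_add hA) sE. Qed.

Lemma nrm_proj_mul_subr1_le E X : is_projection star E ->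
  nrm (E * (1 - X)) <= nrm (E - X).
Proof.
move=> projE; have [_ EE] := projE.
have -> : E * (1 - X) = E * (E - X) by rewrite !mulrBr EE mulr1.
exact/nrm_contr_mull/nrm_proj_le1.
Qed.

Lemma nrm_subr1_proj_mul_le E X : is_projection star E ->
  nrm ((1 - E) * X) <= nrm (E - X).
Proof.
move=> projE; have [_ EE] := projE.
have -> : (1 - E) * X = (1 - E) * (X - E) by rewrite mulrBr mul_subr1_idem ?subr0.
by rewrite -[E - X]opprB nrmN; exact/nrm_contr_mull/nrm_proj_le1/proj_subr1.
Qed.

Section QuasiProjectionPair.
Variables P Q : A.
Hypotheses (projP : is_projection star P)
  (starQ : star Q = (P *+ 2 - 1) * Q * (P *+ 2 - 1)).

Lemma nrm_subr1_mul_swap : nrm ((1 - P) * Q) = nrm (Q * (1 - P)).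
Proof.
have [sP PP] := projP.
rewrite -nrm_star (star_mul hA) star_subr1 sP starQ -(mulrA _ _ (1 - P)).
rewrite mul_refl_subr1 // mulrN nrmN -mulrA.
exact: nrm_symmetry_mull (star_refl sP) (mul_refl_refl PP).
Qed.

Lemma nrm_mul_subr1_swap : nrm ((1 - Q) * P) = nrm (P * (1 - Q)).
Proof.
have [sP PP] := projP.
rewrite -nrm_star (star_mul hA) star_subr1 sP starQ.
have -> : P * (1 - (P *+ 2 - 1) * Q * (P *+ 2 - 1)) = P * (1 - Q) * (P *+ 2 - 1).
  rewrite mulrBr mulr1 !mulrA mul_idem_refl //.
  by rewrite (mulrBr P) mulr1 mulrBl mul_idem_refl.
exact: nrm_symmetry_mulr (star_refl sP) (mul_refl_refl PP).
Qed.

End QuasiProjectionPair.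

End CstarAlgebra.

Theorem theorem5p13 (R : realType) (A : algType R[i]) (star : A -> A)
    (nrm : A -> R) (hA : unital_Cstar_algebra star nrm) (P Q : A)
    (hPQ : quasi_projection_pair star P Q) :
  nrm ((1 - P) * Q) = nrm (Q * (1 - P)) /\
  nrm ((1 - Q) * P) = nrm (P * (1 - Q)) /\
  nrm ((P - Q) ^+ 2) <= Num.max (nrm ((1 - P) * Q)) (nrm ((1 - Q) * P)) /\
  Num.max (nrm ((1 - P) * Q)) (nrm ((1 - Q) * P)) <= nrm (P - Q).
Proof.
have [projP [QQ starQ]] := hPQ; have [_ PP] := projP.
have swapP := nrm_subr1_mul_swap hA projP starQ.
have swapQ := nrm_mul_subr1_swap hA projP starQ.
split=> //; split=> //; split.
  rewrite sqr_sub_idem //; apply: le_trans (nrm_block_diag hA _ _ projP) _.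
  have nrmP := nrm_proj_le1 hA projP.
  have nrm1P := nrm_proj_le1 hA (proj_subr1 hA projP).
  rewrite ge_max !le_max swapQ.
  by rewrite (nrm_contr_mulr hA _ nrmP) (nrm_contr_mulr hA _ nrm1P) orbT.
by rewrite ge_max (nrm_subr1_proj_mul_le hA) // swapQ (nrm_proj_mul_subr1_le hA).
Qed.
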